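(* Let $\Delta\ge 1$ and define $F_\Delta(k,d)=\Delta^{-k\log\frac{k}{d}}$. For every positive integer $t$ and all integers $k_1,\ldots,k_t$ and $d_1,\ldots,d_t$ with $1\le k_i<d_i$ for all $i\le t$, $$\prod_{i\le t}F_\Delta(k_i,d_i)\le F_\Delta\Big(\sum_{i\le t}k_i,\sum_{i\le t}d_i\Big).$$
   Context: Logarithms are natural. *)

From HB Require Import structures.
From mathcomp Require Import all_boot all_order all_algebra.
From mathcomp Require Import all_classical all_reals all_analysis.
Set Implicit Arguments. Unset Strict Implicit. Unset Printing Implicit Defensive.
Import Order.TTheory GRing.Theory Num.Theory.
Local Open Scope ring_scope.

Definition F (R : realType) (D : R) (k d : nat) : R :=
  D `^ (- (k%:R * ln (k%:R / d%:R))).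

From HB Require Import structures.
From mathcomp Require Import all_boot all_order all_algebra.
From mathcomp Require Import all_classical all_reals all_analysis.
From mathcomp Require Import ring lra.
Set Implicit Arguments.
Unset Strict Implicit.
Unset Printing Implicit Defensive.

Import Order.TTheory GRing.Theory Num.Theory.
Local Open Scope ring_scope.

(* Since D >= 1, taking logarithms to base D reduces the claim to the log-sum
   inequality  (sum k) ln (sum k / sum d) <= sum (k_i ln (k_i / d_i)),
   which follows by summing the pointwise bounds
   k_i - d_i c <= k_i ln (k_i / (d_i c)),  c = sum k / sum d,
   coming from ln x <= x - 1: the left-hand sides add up to 0. *)

Section LogSum.
Variable R : realType.

Lemma powR_sum (D : R) (I : Type) (r : seq I) (P : pred I)
    (e : I -> R) :
  D != 0 -> \prod_(i <- r | P i) D `^ e i = D `^ (\sum_(i <- r | P i) e i).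
Proof.
move=> D0; apply/esym; apply: (big_morph (powR D)) => [x y|].
  by rewrite powRD // D0 implybT.
by rewrite powRr0.
Qed.

Lemma ln_le_subr1 (x : R) : 0 < x -> ln x <= x - 1.
Proof.
move=> x0; rewrite -[x in ln x](subrKC 1); apply: le_ln1Dx.
by rewrite -subr_gt0 opprK subrK.
Qed.

Lemma subr_le_mul_ln_div (a b : R) :
  0 < a -> 0 < b -> a - b <= a * ln (a / b).
Proof.
move=> a0 b0; have ba0 : 0 < b / a by rewrite divr_gt0.
have := ler_wpM2l (ltW a0) (ln_le_subr1 ba0).
have -> : a * (b / a - 1) = b - a by field; rewrite gt_eqF.
rewrite !ln_div ?posrE //; lra.
Qed.

Lemma sumr_gt0_nonempty (I : finType) (i0 : I) (f : I -> R) :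
  (forall i, 0 < f i) -> 0 < \sum_i f i.
Proof.
move=> f0; rewrite (bigD1 i0) //= ltr_pwDl ?sumr_ge0 // => i _.
exact: ltW.
Qed.

Lemma log_sum_inequality (I : finType) (a b : I -> R) :
  (forall i, 0 < a i) -> (forall i, 0 < b i) ->
  (\sum_i a i) * ln ((\sum_i a i) / (\sum_i b i))
    <= \sum_i a i * ln (a i / b i).
Proof.
move=> a0 b0; case: (pickP (@predT I)) => [i0 _ | I0]; last first.
  by rewrite !big_pred0 // mul0r.
have A0 := sumr_gt0_nonempty i0 a0; have B0 := sumr_gt0_nonempty i0 b0.
set A := \sum_i a i in A0 *; set B := \sum_i b i in B0 *.
have c0 : 0 < A / B by rewrite divr_gt0.
have pointwise i : a i - b i * (A / B)
    <= a i * ln (a i / b i) - a i * ln (A / B).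
  have abi0 : 0 < a i / b i by rewrite divr_gt0.
  rewrite -mulrBr -ln_div ?posrE // -mulrA -invfM.
  exact: subr_le_mul_ln_div (a0 i) (mulr_gt0 (b0 i) c0).
have : \sum_i (a i - b i * (A / B))
    <= \sum_i (a i * ln (a i / b i) - a i * ln (A / B)).
  by apply: ler_sum => i _; apply: pointwise.
rewrite !sumrB -!mulr_suml -/A -/B mulrCA divff ?gt_eqF //.
by rewrite mulr1 subrr subr_ge0.
Qed.

End LogSum.

Theorem lemma3 (R : realType) (D : R) (t : nat) (k d : nat -> nat) :
  1 <= D -> (0 < t)%N ->
  (forall i, (i < t)%N -> (1 <= k i)%N /\ (k i < d i)%N) ->
  \prod_(i < t) F D (k i) (d i) <= F D (\sum_(i < t) k i)%N (\sum_(i < t) d i)%N.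
Proof.
move=> D1 _ hkd.
have D0 : D != 0 by rewrite gt_eqF // (lt_le_trans ltr01).
have k0 (i : 'I_t) : 0 < (k i)%:R :> R.
  by rewrite ltr0n; case: (hkd i (ltn_ord i)).
have d0 (i : 'I_t) : 0 < (d i)%:R :> R.
  by rewrite ltr0n; case: (hkd i (ltn_ord i)) => /leq_trans + /ltnW; apply.
rewrite /F powR_sum //.
apply: ler_powR => //; rewrite sumrN lerN2 !natr_sum.
exact: log_sum_inequality.
Qed.
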